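(* Let $k\ge3$, $1\le s\le k$, $r\le\min\{n_1,\dots,n_s\}$, $\mathcal A\in\mathbb R^{n_1}\otimes\cdots\otimes\mathbb R^{n_k}$ nonzero, and let $\{U_{[p]}\}$ be generated by the iAPD-ALS algorithm (described in the context) with proximal parameter $\epsilon>0$ and truncation parameter $\kappa$. If the $p$-th iteration is not a truncation iteration, then $$f(U_{[p]})-f(U_{[p-1]})\ge\frac{\min\{\epsilon,2\kappa^2\}}{2}\,\|U_{[p]}-U_{[p-1]}\|_F^2 .$$
   Context: Notation. $\mathrm V(m,n)=\{U\in\mathbb R^{n\times m}:U^{\mathsf T}U=I_m\}$; $\mathrm B(m,n)$: $n\times m$ real matrices with unit columns. $\mathcal A\tau(\mathbf u_1,\dots,\mathbf u_k)=\langle\mathcal A,\mathbf u_1\otimes\cdots\otimes\mathbf u_k\rangle$; $\mathcal A\tau_i(\mathbf u_1,\dots,\mathbf u_k)\in\mathbb R^{n_i}$ is the contraction of $\mathcal A$ with all $\mathbf u_l$, $l\ne i$. For $U=(U^{(1)},\dots,U^{(k)})$ with columns $\mathbf u^{(i)}_j$, $j\le t$: $f(U)=\sum_j\mathcal A\tau(\mathbf u^{(1)}_j,\dots,\mathbf u^{(k)}_j)^2$, $\|U\|_F^2=\sum_i\|U^{(i)}\|_F^2$. $\operatorname{Polar}(X)$ is the set of $Q\in\mathrm V(m,n)$ maximizing $\langle Q,X\rangle$. iAPD-ALS algorithm. Choose $U_{[0]}\in\mathrm V(r,n_1)\times\cdots\times\mathrm V(r,n_s)\times\mathrm B(r,n_{s+1})\times\cdots\times\mathrm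 B(r,n_k)$ with $f(U_{[0]})>0$ and $\kappa\in(0,\sqrt{f(U_{[0]})/r})$. For $p=1,2,\dots$ ($t$ = current number of columns, $\mathbf u^{(i)}_{j,[q]}$ = $j$-th column of $U^{(i)}_{[q]}$), let $\mathbf x^i_{j,[p]}=(\mathbf u^{(1)}_{j,[p]},\dots,\mathbf u^{(i-1)}_{j,[p]},\mathbf u^{(i)}_{j,[p-1]},\dots,\mathbf u^{(k)}_{j,[p-1]})$, $\lambda^{i-1}_{j,[p]}=\mathcal A\tau(\mathbf x^i_{j,[p]})$, $\Lambda^{(i)}_{[p]}=\operatorname{diag}(\lambda^{i-1}_{j,[p]})_j$, $V^{(i)}_{[p]}=[\mathcal A\tau_i(\mathbf x^i_{j,[p]})]_j$. (1) For $i=1,\dots,s$ in turn pick $U^{(i)}_{[p]}\in\operatorname{Polar}(V^{(i)}_{[p]}\Lambda^{(i)}_{[p]})$, and if the smallest eigenvalue of $(U^{(i)}_{[p]})^{\mathsf T}V^{(i)}_{[p]}\Lambda^{(i)}_{[p]}$ is $<\epsilon$, instead pick $U^{(i)}_{[p]}\in\operatorname{Polar}(V^{(i)}_{[p]}\Lambda^{(i)}_{[p]}+\epsilon U^{(i)}_{[p-1]})$. (2) Truncation: with $J=\{j:|((U^{(s)}_{[p]})^{\mathsf T}V^{(s)}_{[p]})_{jj}|<\kappa\}$, if $J\neq\emptyset$ (a truncation iteration) delete columns in $J$ from $U^{(1)}_{[p]},\dots,U^{(s)}_{[p]}$ and $U^{(s+1)}_{[p-1]},\dots,U^{(k)}_{[p-1]}$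 and set $t:=t-|J|$. (3) For $i=s+1,\dots,k$ in turn, $\mathbf u^{(i)}_{j,[p]}=\operatorname{sgn}(\lambda^{i-1}_{j,[p]})\mathcal A\tau_i(\mathbf x^i_{j,[p]})/\|\mathcal A\tau_i(\mathbf x^i_{j,[p]})\|$. Set $U_{[p]}=(U^{(1)}_{[p]},\dots,U^{(k)}_{[p]})$ and iterate indefinitely. *)

From HB Require Import structures.
From mathcomp Require Import all_boot all_order all_algebra.
From mathcomp Require Import reals.
Set Implicit Arguments. Unset Strict Implicit. Unset Printing Implicit Defensive.
Import Order.TTheory GRing.Theory Num.Theory.
Local Open Scope ring_scope.

Section IAPD.
Variable R : realType.
Variable k : nat.
Variable n : 'I_k -> nat.

Definition idx := {dffun forall i : 'I_k, 'I_(n i)}.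
Definition tensor := idx -> R.
Definition vecs := forall l : 'I_k, 'cV[R]_(n l).

(* A tau (u_1,...,u_k) = <A, u_1 (x) ... (x) u_k> *)
Definition contr (A : tensor) (u : vecs) : R :=
  \sum_(iota : idx) A iota * \prod_(l < k) u l (iota l) 0.

Definition contr_i (A : tensor) (i : 'I_k) (u : vecs) : 'cV[R]_(n i) :=
  \col_(a < n i) \sum_(iota : idx | iota i == a)
                    A iota * \prod_(l < k | l != i) u l (iota l) 0.

Definition factors (t : nat) := forall i : 'I_k, 'M[R]_(n i, t).

Definition colvecs t (U : factors t) (j : 'I_t) : vecs := fun l => col j (U l).

Definition fobj (A : tensor) t (U : factors t) : R :=
  \sum_(j < t) (contr A (colvecs U j)) ^+ 2.

Definition frob2 t (U : factors t) : R :=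
  \sum_(i < k) \sum_(a < n i) \sum_(j < t) (U i a j) ^+ 2.

(* U in V(t,n_1) x ... x V(t,n_s) x B(t,n_{s+1}) x ... x B(t,n_k);
   mode i (0-based) is orthonormal iff i < s (i.e. paper's i+1 <= s) *)
Definition feasible (s : nat) t (U : factors t) : Prop :=
  (forall i : 'I_k, (i < s)%N -> (U i)^T *m U i = 1%:M) /\
  (forall i : 'I_k, (s <= i)%N -> forall j : 'I_t, \sum_(a < n i) (U i a j) ^+ 2 = 1).

Definition mxdot m t (X Y : 'M[R]_(m, t)) : R := \sum_(a < m) \sum_(j < t) X a j * Y a j.

Definition Polar m t (X Q : 'M[R]_(m, t)) : Prop :=
  Q^T *m Q = 1%:M /\
  forall Q' : 'M[R]_(m, t), Q'^T *m Q' = 1%:M -> mxdot Q' X <= mxdot Q X.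

Definition mix t (i : 'I_k) (Unew Uold : factors t) (j : 'I_t) : vecs :=
  fun l => col j (if (l < i)%N then Unew l else Uold l).

Definition Vmat (A : tensor) t (i : 'I_k) (Unew Uold : factors t) : 'M[R]_(n i, t) :=
  \matrix_(a < n i, j < t) contr_i A i (mix i Unew Uold j) a 0.

Definition Lam (A : tensor) t (i : 'I_k) (Unew Uold : factors t) : 'M[R]_t :=
  diag_mx (\row_(j < t) contr A (mix i Unew Uold j)).

Definition polar_phase (A : tensor) (s : nat) (eps : R) t (Uold Unew : factors t) : Prop :=
  forall i : 'I_k, (i < s)%N ->
    let X := Vmat A i Unew Uold *m Lam A i Unew Uold in
    exists W : 'M[R]_(n i, t), Polar X W /\
      ((exists a : R, eigenvalue (W^T *m X) a /\ a < eps) ->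
          Polar (X + eps *: Uold i) (Unew i)) /\
      (~ (exists a : R, eigenvalue (W^T *m X) a /\ a < eps) -> Unew i = W).

(* j \in J : |((U^(s)_[p])^T V^(s)_[p])_jj| < kappa  (mode s is the 0-based index i with i.+1 = s) *)
Definition in_trunc (A : tensor) (s : nat) (kappa : R) t (Uold Unew : factors t) (j : 'I_t) : Prop :=
  forall i : 'I_k, i.+1 = s -> `|((Unew i)^T *m Vmat A i Unew Uold) j j| < kappa.

(* step (3): ALS normalized updates of the modes s+1..k, after the column deletion
   given by the increasing enumeration g of the kept columns *)
Definition als_phase (A : tensor) (s : nat) t t' (g : 'I_t' -> 'I_t)
    (Uold Unew : factors t) (Unext : factors t') : Prop :=
  let T : factors t' := fun l => mxsub id g (if (l < s)%N then Unew l else Uold l) in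
  (forall l : 'I_k, (l < s)%N -> Unext l = T l) /\
  (forall i : 'I_k, (s <= i)%N -> forall j : 'I_t',
     let x := mix i Unext T j in
     col j (Unext i) =
       (Num.sg (contr A x) * (Num.sqrt (\sum_(a < n i) (contr_i A i x a 0) ^+ 2))^-1)
         *: contr_i A i x).

(* one iteration U_[p-1] = Uold  |->  U_[p] = Unext of iAPD-ALS;
   trunc = true iff it is a truncation iteration (J <> empty) *)
Definition iapd_step (trunc : bool) (A : tensor) (s : nat) (eps kappa : R)
    t t' (Uold : factors t) (Unext : factors t') : Prop :=
  exists Unew : factors t,
    polar_phase A s eps Uold Unew /\
    exists g : 'I_t' -> 'I_t,
      (forall a b : 'I_t', (a < b)%N = (g a < g b)%N) /\
      (forall j : 'I_t, (exists j', g j' = j) <-> ~ in_trunc A s kappa Uold Unew j) /\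
      (trunc = true <-> exists j, in_trunc A s kappa Uold Unew j) /\
      als_phase A s g Uold Unew Unext.

End IAPD.

From mathcomp Require Import all_boot all_order all_algebra.
From mathcomp Require Import reals.
From mathcomp Require Import ring lra.
From mathcomp.real_closed Require Import complex.
From Stdlib Require Import Classical.
Set Implicit Arguments. Unset Strict Implicit. Unset Printing Implicit Defensive.
Import Order.TTheory GRing.Theory Num.Theory.
Local Open Scope ring_scope.
Local Open Scope sesquilinear_scope.

(* f(U_p) - f(U_{p-1}) telescopes over the k single-mode updates of the sweep,
   and in each of them the values lambda_j = A tau(x_j) are linear in the updated factor.
   For a polar mode, optimality of the polar factor gives
   <U_new - U_old, V Lambda> >= eps/2 ||U_new - U_old||^2: directly from the proximal term
   when it is used, and otherwise because W^T V Lambda is then symmetric (first-order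
   optimality along Givens rotations) with spectrum >= eps.  As
   sum_j (lambda_new^2 - lambda_old^2) >= 2 sum_j lambda_old (lambda_new - lambda_old)
   = 2 <U_new - U_old, V Lambda>, the mode contributes at least eps ||U_new - U_old||^2.
   For an ALS mode the normalised column w = sgn(lambda) v / |v| has lambda_new = |v| >= |lambda|
   and lambda_new^2 - lambda^2 >= kappa^2 ||w - u||^2 as long as |lambda| >= kappa; without
   truncation this holds at mode s+1 and propagates because |lambda| only grows. *)

Lemma bigD2 (V : nmodType) m (a b : 'I_m) (F : 'I_m -> V) : a != b ->
  \sum_l F l = F a + F b + \sum_(l | (l != a) && (l != b)) F l.
Proof.
move=> neq_ab; rewrite (bigD1 a) //= (bigD1 b) 1?eq_sym //= addrA.
by congr (_ + _); apply: eq_bigl => l; rewrite andbC.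
Qed.

Section TraceForms.
Variable F : numFieldType.

Lemma mxtrace_skew_sym t (K H : 'M[F]_t) : K^T = - K -> H^T = H -> \tr (K *m H) = 0.
Proof.
move=> skewK symH; have : \tr (K *m H) = - \tr (K *m H).
  by rewrite -[LHS]mxtrace_tr trmx_mul symH skewK mulmxN linearN /= mxtrace_mulC.
by move/eqP; rewrite -addr_eq0 -mulr2n mulrn_eq0 => /eqP.
Qed.

Lemma mxtrace_quadform m t (D : 'M[F]_(m, t)) (H : 'M[F]_t) :
  \tr (D^T *m D *m H) = \sum_a (row a D *m H *m (row a D)^T) 0 0.
Proof.
rewrite -mulmxA mxtrace_mulC /mxtrace; apply: eq_bigr => a _.
by rewrite -row_mul !mxE; apply: eq_bigr => j _; rewrite !mxE.
Qed.

End TraceForms.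

Section NormalMatrix.
Variables (C : numClosedFieldType) (t : nat) (M : 'M[C]_t).
Hypothesis normalM : M \is normalmx.
Let P := spectralmx M.
Let d := spectral_diag M.

Lemma spectral_decomposition : M = P^t* *m diag_mx d *m P.
Proof. by rewrite -invmx_unitary ?spectral_unitarymx //; exact/orthomx_spectralP. Qed.

Lemma spectral_diag_eigenvalue i : eigenvalue M (d 0 i).
Proof.
have PPt : P *m P^t* = 1%:M by apply/unitarymxP; exact: spectral_unitarymx.
apply/eigenvalueP; exists (row i P).
  rewrite -row_mul [in X in row _ X]spectral_decomposition !mulmxA PPt mul1mx.
  by rewrite mul_diag_mx; apply/rowP => j; rewrite !mxE.
apply/eqP => /rowP Pi0; move/matrixP: PPt => /(_ i i).
rewrite !mxE eqxx big1 => [/eqP|j _]; first by rewrite eq_sym oner_eq0.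
by have := Pi0 j; rewrite !mxE => ->; rewrite mul0r.
Qed.

Lemma normal_quadform_ge (e : C) : (forall i, e <= d 0 i) ->
  forall z : 'rV_t, e * (z *m z^t*) 0 0 <= (z *m M *m z^t*) 0 0.
Proof.
move=> le_e_d z; set w := z *m P^t*.
have wE : w^t* = P *m z^t* by rewrite /w trmx_mul map_mxM trmxCK.
have PtP : P^t* *m P = 1%:M.
  by rewrite -invmx_unitary ?spectral_unitarymx // mulVmx ?spectral_unit.
have -> : z *m M *m z^t* = w *m diag_mx d *m w^t*.
  by rewrite {1}spectral_decomposition wE !mulmxA.
have -> : z *m z^t* = w *m w^t* by rewrite wE mulmxA -(mulmxA z) PtP mulmx1.
clearbody w; rewrite !mxE mulr_sumr; apply: ler_sum => i _.
rewrite mul_mx_diag !mxE [leRHS]mulrAC [leRHS]mulrC.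
by apply: ler_wpM2r; [exact: mul_conjC_ge0 | exact: le_e_d].
Qed.

End NormalMatrix.

Lemma eigenvalue_map (F K : fieldType) (f : {rmorphism F -> K}) t (H : 'M[F]_t) a :
  eigenvalue (map_mx f H) (f a) = eigenvalue H a.
Proof. by rewrite !eigenvalue_root_char -map_char_poly fmorph_root. Qed.

Lemma sym_quadform_ge (R : rcfType) t (H : 'M[R]_t) (e : R) : H^T = H ->
  (forall a, eigenvalue H a -> e <= a) ->
  forall y : 'rV_t, e * (y *m y^T) 0 0 <= (y *m H *m y^T) 0 0.
Proof.
move=> symH le_e_eig y; pose f := real_complex R.
have realf (a : R) : f a \is Num.real by apply/complex_realP; exists a.
have conj_mapf m p (B : 'M[R]_(m, p)) : (map_mx f B)^t* = map_mx f B^T.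
  by apply/matrixP => i j; rewrite !mxE conj_Creal.
set Hc := map_mx f H.
have hermHc : Hc \is hermsymmx.
  apply: realsym_hermsym; last by apply/mxOverP => i j; rewrite mxE.
  by apply/is_hermitianmxP; rewrite expr0 scale1r map_mx_id // map_trmx symH.
have normalHc := hermitian_normalmx hermHc.
have le_e_d i : f e <= spectral_diag Hc 0 i.
  have := spectral_diag_eigenvalue normalHc i.
  have /mxOverP /(_ 0 i) /complex_realP [a ->] := hermitian_spectral_diag_real hermHc.
  by rewrite eigenvalue_map lecR => /le_e_eig.
have := normal_quadform_ge normalHc le_e_d (map_mx f y).
by rewrite conj_mapf -!map_mxM !mxE -rmorphM lecR.
Qed.

Section PolarFactor.
Variable R : realType.

Lemma mxdot_trace m t (X Y : 'M[R]_(m, t)) : mxdot X Y = \tr (X^T *m Y).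
Proof.
rewrite /mxdot /mxtrace exchange_big /=; apply: eq_bigr => j _.
by rewrite !mxE; apply: eq_bigr => a _; rewrite !mxE.
Qed.

Lemma mxdot_ge0 m t (X : 'M[R]_(m, t)) : 0 <= mxdot X X.
Proof. by do 2![apply: sumr_ge0 => ? _]; rewrite -expr2 sqr_ge0. Qed.

Lemma lin_coef_eq0_of_quad_le0 (S D : R) : (forall u, u * D - u ^+ 2 * S <= 0) -> D = 0.
Proof.
move=> le0; pose v := `|S| + 1.
have S1_le_v : S + 1 <= v by rewrite lerD2r ler_norm.
have v_gt0 : 0 < v by rewrite ltr_pwDr // normr_ge0.
have : D ^+ 2 * (v - S) / v ^+ 2 <= 0.
  have := le0 (D / v); congr (_ <= _); field; exact: lt0r_neq0.
rewrite pmulr_lle0 ?invr_gt0 ?exprn_gt0 // => DvS.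
by apply/eqP; rewrite -sqrf_eq0 eq_le sqr_ge0 andbT; nra.
Qed.

Definition givens m t (a b : 'I_m) (c s : R) (W : 'M[R]_(m, t)) : 'M[R]_(m, t) :=
  \matrix_(l, j) (if l == a then c * W a j + s * W b j
                  else if l == b then c * W b j - s * W a j else W l j).

Section Givens.
Variables (m t : nat) (a b : 'I_m) (c s : R) (W : 'M[R]_(m, t)).
Hypothesis neq_ab : a != b.

Lemma givensE l j : l != a -> l != b -> givens a b c s W l j = W l j.
Proof. by move=> /negbTE la /negbTE lb; rewrite mxE la lb. Qed.

Lemma givens_orth : c ^+ 2 + s ^+ 2 = 1 -> (givens a b c s W)^T *m givens a b c s W = W^T *m W.
Proof.
move=> cs1; apply/matrixP => i j; rewrite !mxE (bigD2 _ neq_ab) [RHS](bigD2 _ neq_ab).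
rewrite (eq_bigr (fun l => W^T i l * W l j)) => [|l /andP[la lb]]; last first.
  by rewrite ![_^T _ _]mxE !givensE.
congr (_ + _); rewrite !mxE eqxx eq_sym (negbTE neq_ab) eqxx.
transitivity ((c ^+ 2 + s ^+ 2) * (W a i * W a j + W b i * W b j)); first ring.
by rewrite cs1 mul1r.
Qed.

Lemma mxdot_givens X : mxdot (givens a b c s W) X = mxdot W X +
    (c - 1) * \sum_j (W a j * X a j + W b j * X b j) +
    s * \sum_j (W b j * X a j - W a j * X b j).
Proof.
rewrite /mxdot (bigD2 _ neq_ab) [in RHS](bigD2 _ neq_ab).
rewrite (eq_bigr (fun l => \sum_j W l j * X l j)) => [|l /andP[la lb]]; last first.
  by apply: eq_bigr => j _; rewrite givensE.
rewrite !mulr_sumr -!addrA -!big_split !addrA [RHS]addrAC -!big_split /=.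
congr (_ + _); apply: eq_bigr => j _.
rewrite !mxE eqxx eq_sym (negbTE neq_ab) eqxx; ring.
Qed.

End Givens.

(* A Givens rotation of a maximizer W cannot increase <W, X>; its first-order term forces symmetry. *)
Lemma Polar_sym m t (X W : 'M[R]_(m, t)) : Polar X W -> (X *m W^T)^T = X *m W^T.
Proof.
move=> [WW maxW]; apply/matrixP => a b; rewrite mxE.
have [-> // | neq_ab] := eqVneq a b.
set S := \sum_j (W a j * X a j + W b j * X b j).
suff : \sum_j (W b j * X a j - W a j * X b j) = 0.
  rewrite sumrB => /eqP; rewrite subr_eq0 => /eqP eq_ab.
  have XWtE x y : (X *m W^T) x y = \sum_j W y j * X x j.
    by rewrite mxE; apply: eq_bigr => j _; rewrite mxE mulrC.
  by rewrite !XWtE eq_ab.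
apply: (@lin_coef_eq0_of_quad_le0 S) => u.
have u2_gt0 : 0 < 1 + u ^+ 2 by rewrite ltr_pwDl ?sqr_ge0.
pose c := (1 - u ^+ 2) / (1 + u ^+ 2); pose s := 2 * u / (1 + u ^+ 2).
have cs1 : c ^+ 2 + s ^+ 2 = 1 by rewrite /c /s; field; rewrite gt_eqF.
have := maxW _ (etrans (givens_orth W neq_ab cs1) WW); rewrite mxdot_givens // -/S.
set D := \sum_j _ => le_rot.
have -> : u * D - u ^+ 2 * S = (1 + u ^+ 2) / 2 * ((c - 1) * S + s * D).
  by rewrite /c /s; field; rewrite gt_eqF.
by rewrite pmulr_rle0 ?divr_gt0 //; lra.
Qed.

Lemma Polar_factor_tr m t (X W : 'M[R]_(m, t)) : Polar X W -> X = W *m X^T *m W.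
Proof.
move=> WP; rewrite -[LHS]mulmx1 -WP.1 mulmxA -(Polar_sym WP).
by rewrite trmx_mul trmxK.
Qed.

Lemma Polar_mulTmx_sym m t (X W : 'M[R]_(m, t)) : Polar X W -> (W^T *m X)^T = W^T *m X.
Proof.
move=> WP; rewrite {2}(Polar_factor_tr WP) !mulmxA WP.1 mul1mx.
by rewrite trmx_mul trmxK.
Qed.

Lemma Polar_factor m t (X W : 'M[R]_(m, t)) : Polar X W -> X = W *m (W^T *m X).
Proof. by move=> WP; rewrite -(Polar_mulTmx_sym WP) trmx_mul trmxK mulmxA -Polar_factor_tr. Qed.

Lemma Polar_eigen_ascent (e : R) m t (X W U : 'M[R]_(m, t)) : Polar X W ->
  (forall a, eigenvalue (W^T *m X) a -> e <= a) -> U^T *m U = 1%:M ->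
  e / 2 * mxdot (W - U) (W - U) <= mxdot (W - U) X.
Proof.
move=> WP le_e_eig UU; have WW := WP.1.
set H := W^T *m X; set D := W - U; set K := W^T *m U - U^T *m W.
have skewK : K^T = - K by rewrite /K linearB /= !trmx_mul !trmxK opprB.
have DtD : D^T *m D = 2%:R *: (D^T *m W) - K.
  rewrite /K /D [(W - U)^T]linearB /= !mulmxBl !mulmxBr WW UU.
  by apply/matrixP => a b; rewrite !mxE; ring.
(* As X = W H, 2 <D, X> = tr (2 D^T W H), and the skew part K of D^T D is trace-orthogonal to H. *)
have twice : 2 * mxdot D X = \tr (D^T *m D *m H).
  rewrite DtD mulmxBl linearB /= (mxtrace_skew_sym skewK (Polar_mulTmx_sym WP)) subr0.
  by rewrite -scalemxAl mxtraceZ mxdot_trace {1}(Polar_factor WP) mulmxA mulr_natl.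
have : e * mxdot D D <= \tr (D^T *m D *m H).
  rewrite mxdot_trace -{1}[D^T *m D]mulmx1 !mxtrace_quadform mulr_sumr.
  apply: ler_sum => a _; rewrite mulmx1.
  exact: sym_quadform_ge (Polar_mulTmx_sym WP) le_e_eig _.
lra.
Qed.

Lemma Polar_prox_ascent (e : R) m t (X Q U : 'M[R]_(m, t)) : Polar (X + e *: U) Q ->
  U^T *m U = 1%:M -> e / 2 * mxdot (Q - U) (Q - U) <= mxdot (Q - U) X.
Proof.
move=> [QQ maxQ] UU; have := maxQ U UU.
have tQU : \tr (Q^T *m U) = \tr (U^T *m Q) by rewrite -mxtrace_tr trmx_mul trmxK.
rewrite !mxdot_trace [(Q - U)^T]linearB /= !mulmxBl !mulmxBr !mulmxDr -!scalemxAr.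
rewrite !linearB !linearD !linearZ /= QQ UU tQU; lra.
Qed.

End PolarFactor.

Section NormalizedUpdate.
Variables (R : rcfType) (m : nat) (u v : 'I_m -> R).
Hypothesis u_unit : \sum_a u a ^+ 2 = 1.

Local Notation lam := (\sum_a u a * v a).
Local Notation N := (Num.sqrt (\sum_a v a ^+ 2)).

Lemma sqr_dot_le_unit : lam ^+ 2 <= \sum_a v a ^+ 2.
Proof.
set L := lam; have LE : lam = L by []; clearbody L.
rewrite -subr_ge0; have <- : \sum_a (v a - L * u a) ^+ 2 = \sum_a v a ^+ 2 - L ^+ 2.
  have -> : L ^+ 2 = 2 * L * lam - L ^+ 2 * \sum_a u a ^+ 2 by rewrite u_unit LE; ring.
  rewrite !mulr_sumr -sumrB -!sumrN -!big_split /=.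
  by apply: eq_bigr => a _; ring.
by apply: sumr_ge0 => a _; exact: sqr_ge0.
Qed.

Lemma normalized_update (w : 'I_m -> R) (kap : R) :
  (forall a, w a = Num.sg lam * N^-1 * v a) -> 0 < kap -> kap <= `|lam| ->
  [/\ \sum_a w a ^+ 2 = 1, `|lam| <= `|\sum_a w a * v a| &
      kap ^+ 2 * \sum_a (w a - u a) ^+ 2 <= (\sum_a w a * v a) ^+ 2 - lam ^+ 2].
Proof.
move=> wE kap_gt0 kap_le_lam.
have NN : N ^+ 2 = \sum_a v a ^+ 2 by rewrite sqr_sqrtr ?sumr_ge0 // => a _; exact: sqr_ge0.
have L_le_N : `|lam| <= N.
  rewrite -(ler_pXn2r (isT : (0 < 2)%N)) ?nnegrE ?sqrtr_ge0 //.
  by rewrite real_normK ?num_real // NN sqr_dot_le_unit.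
set L := lam in wE kap_le_lam L_le_N *; have LE : lam = L by []; clearbody L.
set M := N in wE NN L_le_N *; clearbody M.
have M_gt0 : 0 < M by lra.
have L_neq0 : L != 0 by rewrite -normr_gt0; lra.
have sg2 : Num.sg L ^+ 2 = 1 by rewrite sqr_sg L_neq0.
have wv : \sum_a w a * v a = Num.sg L * M.
  transitivity (Num.sg L * M^-1 * M ^+ 2); last by field; rewrite gt_eqF.
  by rewrite NN mulr_sumr; apply: eq_bigr => a _; rewrite wE; ring.
have ww : \sum_a w a ^+ 2 = 1.
  transitivity (Num.sg L ^+ 2 * M^-1 ^+ 2 * M ^+ 2); last by rewrite sg2; field; rewrite gt_eqF.
  by rewrite NN mulr_sumr; apply: eq_bigr => a _; rewrite wE; ring.
have wu : \sum_a w a * u a = `|L| / M.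
  transitivity (Num.sg L / M * lam); last by rewrite LE [`|L|]normrEsg mulrAC.
  by rewrite mulr_sumr; apply: eq_bigr => a _; rewrite wE; ring.
have dist : \sum_a (w a - u a) ^+ 2 = 2 - 2 * (`|L| / M).
  transitivity (\sum_a w a ^+ 2 - 2 * \sum_a w a * u a + \sum_a u a ^+ 2).
    by rewrite mulr_sumr -sumrB -big_split /=; apply: eq_bigr => a _; ring.
  by rewrite ww wu u_unit; ring.
split => //; first by rewrite wv normrM normr_sg L_neq0 mul1r gtr0_norm.
rewrite dist wv exprMn sg2 mul1r -(real_normK (num_real L)) -subr_ge0.
have -> : M ^+ 2 - `|L| ^+ 2 - kap ^+ 2 * (2 - 2 * (`|L| / M)) =
    (M - `|L|) * (M ^+ 2 + M * `|L| - 2 * kap ^+ 2) / M.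
  by field; rewrite gt_eqF.
by apply: divr_ge0; [apply: mulr_ge0; nra | lra].
Qed.

End NormalizedUpdate.

Lemma increasing_ord_inj t' t (g : 'I_t' -> 'I_t) : {homo g : a b / (a < b)%N} -> injective g.
Proof.
move=> g_incr a b gab; apply/eqP; rewrite -val_eqE.
by case: ltngtP => // /g_incr; rewrite gab ltnn.
Qed.

Section IncreasingOnto.
Variables (t' t : nat) (g : 'I_t' -> 'I_t).
Hypotheses (g_incr : {homo g : a b / (a < b)%N}) (g_onto : forall j, exists j', g j' = j).

Lemma map_val_increasing_onto : [seq val (g j) | j <- enum 'I_t'] = iota 0 t.
Proof.
apply: (@irr_sorted_eq _ ltn ltn_trans ltnn) => [| |x]; [|exact: iota_ltn_sorted|].
  have : sorted ltn (map val (enum 'I_t')) by rewrite val_enum_ord iota_ltn_sorted.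
  by rewrite !sorted_map; apply: sub_sorted => a b; exact: g_incr.
rewrite mem_iota add0n; apply/mapP/idP => [[j _ ->] | x_lt_t]; first exact: ltn_ord.
by have [j gj] := g_onto (Ordinal x_lt_t); exists j; rewrite ?mem_enum ?gj.
Qed.

Lemma increasing_onto_size : t' = t.
Proof. by have := congr1 size map_val_increasing_onto; rewrite size_map size_enum_ord size_iota. Qed.

End IncreasingOnto.

Lemma increasing_onto_id t (g : 'I_t -> 'I_t) :
  {homo g : a b / (a < b)%N} -> (forall j, exists j', g j' = j) -> forall j, g j = j.
Proof.
move=> g_incr g_onto j; apply: val_inj.
have := congr1 (nth 0 ^~ j) (map_val_increasing_onto g_incr g_onto).
by rewrite (nth_map j) ?size_enum_ord // nth_ord_enum nth_iota.
Qed.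

Section Contraction.
Variables (R : realType) (k : nat) (n : 'I_k -> nat) (A : tensor R n).

Lemma contr_ext (u u' : vecs R n) : (forall l, u l = u' l) -> contr A u = contr A u'.
Proof.
move=> eq_u; apply: eq_bigr => iota _; congr (_ * _).
by apply: eq_bigr => l _; rewrite eq_u.
Qed.

Lemma contr_i_ext (i : 'I_k) (u u' : vecs R n) :
  (forall l, l != i -> u l = u' l) -> contr_i A i u = contr_i A i u'.
Proof.
move=> eq_u; apply/matrixP => a b; rewrite !mxE; apply: eq_bigr => iota _.
by congr (_ * _); apply: eq_bigr => l li; rewrite eq_u.
Qed.

Lemma contr_expand (i : 'I_k) (u : vecs R n) :
  contr A u = \sum_(a < n i) u i a 0 * contr_i A i u a 0.
Proof.
rewrite /contr (partition_big (fun iota : idx n => iota i) predT) //=.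
apply: eq_bigr => a _; rewrite mxE mulr_sumr; apply: eq_bigr => iota /eqP <-.
by rewrite (bigD1 i) //= mulrCA.
Qed.

(* [mix] with a natural-number mode index, so that [mixn 0] and [mixn k] make sense. *)
Definition mixn t (i : nat) (Unew Uold : factors R n t) (j : 'I_t) : vecs R n :=
  fun l => col j (if (l < i)%N then Unew l else Uold l).

Lemma contr_mixn_congr t (i : nat) (U1 U2 V1 V2 : factors R n t) j :
  (forall l : 'I_k, (l < i)%N -> U1 l = U2 l) -> (forall l : 'I_k, (i <= l)%N -> V1 l = V2 l) ->
  contr A (mixn i U1 V1 j) = contr A (mixn i U2 V2 j).
Proof.
move=> eqU eqV; apply: contr_ext => l; rewrite /mixn.
by case: ltnP => [/eqU | /eqV] ->.
Qed.

Section OneMode.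
Variables (t : nat) (Unew Uold : factors R n t) (i : 'I_k) (j : 'I_t).
Let v := contr_i A i (mix i Unew Uold j).

Lemma contr_mixn_old : contr A (mixn i Unew Uold j) = \sum_a Uold i a j * v a 0.
Proof. by rewrite (contr_expand i); apply: eq_bigr => a _; rewrite /mixn ltnn mxE. Qed.

Lemma contr_mixn_new : contr A (mixn i.+1 Unew Uold j) = \sum_a Unew i a j * v a 0.
Proof.
rewrite (contr_expand i); apply: eq_bigr => a _.
have -> : contr_i A i (mixn i.+1 Unew Uold j) = v.
  apply: contr_i_ext => l /negbTE li.
  by rewrite /mixn ltnS leq_eqVlt -[nat_of_ord l == i]/(l == i) li.
by rewrite /mixn ltnSn mxE.
Qed.

End OneMode.

Definition mode_gain t (i : nat) (Unew Uold : factors R n t) : R :=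
  \sum_j (contr A (mixn i.+1 Unew Uold j) ^+ 2 - contr A (mixn i Unew Uold j) ^+ 2).

Lemma mode_gain_congr t (i : nat) (U1 U2 V1 V2 : factors R n t) :
  (forall l : 'I_k, (l <= i)%N -> U1 l = U2 l) -> (forall l : 'I_k, (i <= l)%N -> V1 l = V2 l) ->
  mode_gain i U1 V1 = mode_gain i U2 V2.
Proof.
move=> eqU eqV; apply: eq_bigr => j _.
by congr (_ ^+ 2 - _ ^+ 2); apply: contr_mixn_congr => l li;
  first [exact: eqU | exact: eqV | exact: eqU (ltnW li) | exact: eqV (ltnW li)].
Qed.

Lemma fobj_telescope t (Unew Uold : factors R n t) :
  fobj A Unew - fobj A Uold = \sum_(i < k) mode_gain i Unew Uold.
Proof.
rewrite exchange_big -sumrB; apply: eq_bigr => j _.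
rewrite -(big_mkord xpredT (fun i =>
  contr A (mixn i.+1 Unew Uold j) ^+ 2 - contr A (mixn i Unew Uold j) ^+ 2)).
rewrite telescope_sumr //; congr (_ ^+ 2 - _ ^+ 2); apply: contr_ext => l.
by rewrite /mixn ltn_ord.
Qed.

End Contraction.

Section Iteration.
Variables (R : realType) (k : nat) (n : 'I_k -> nat) (A : tensor R n).

Lemma mxdot_mode_update t (Unew Uold : factors R n t) (i : 'I_k) :
  mxdot (Unew i - Uold i) (Vmat A i Unew Uold *m Lam A i Unew Uold) =
  \sum_j contr A (mixn i Unew Uold j) *
    (contr A (mixn i.+1 Unew Uold j) - contr A (mixn i Unew Uold j)).
Proof.
rewrite /mxdot exchange_big /=; apply: eq_bigr => j _.
rewrite contr_mixn_new {2}contr_mixn_old -sumrB mulr_sumr /Lam mul_mx_diag.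
apply: eq_bigr => a _; rewrite !mxE -/(mixn i Unew Uold j); ring.
Qed.

Lemma diag_mulTmx_Vmat t (Unew Uold : factors R n t) (i : 'I_k) j :
  ((Unew i)^T *m Vmat A i Unew Uold) j j = contr A (mixn i.+1 Unew Uold j).
Proof. by rewrite contr_mixn_new mxE; apply: eq_bigr => a _; rewrite !mxE. Qed.

Lemma polar_phase_orthonormal s eps t (Uold Unew : factors R n t) (i : 'I_k) :
  polar_phase A s eps Uold Unew -> (i < s)%N -> (Unew i)^T *m Unew i = 1%:M.
Proof.
move=> /(_ i) polar lt_is; have [W [WP [prox nonprox]]] := polar lt_is.
set X := Vmat A i Unew Uold *m Lam A i Unew Uold in WP prox nonprox.
have [/prox [] // | /nonprox ->] := classic (exists a, eigenvalue (W^T *m X) a /\ a < eps).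
exact: WP.1.
Qed.

Lemma polar_phase_ascent s eps t (Uold Unew : factors R n t) (i : 'I_k) :
  polar_phase A s eps Uold Unew -> (i < s)%N -> (Uold i)^T *m Uold i = 1%:M ->
  eps * mxdot (Unew i - Uold i) (Unew i - Uold i) <= mode_gain A i Unew Uold.
Proof.
move=> /(_ i) polar lt_is UU; have [W [WP [prox nonprox]]] := polar lt_is.
set X := Vmat A i Unew Uold *m Lam A i Unew Uold in WP prox nonprox.
have half : eps / 2 * mxdot (Unew i - Uold i) (Unew i - Uold i) <= mxdot (Unew i - Uold i) X.
  have [/prox QP | small] := classic (exists a, eigenvalue (W^T *m X) a /\ a < eps).
    exact: Polar_prox_ascent QP UU.
  rewrite (nonprox small); apply: Polar_eigen_ascent WP _ UU => a eig_a.
  by rewrite leNgt; apply/negP => lt_a; apply: small; exists a.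
have : 2 * mxdot (Unew i - Uold i) X <= mode_gain A i Unew Uold.
  rewrite mxdot_mode_update mulr_sumr; apply: ler_sum => j _.
  set a := contr A (mixn i Unew Uold j); set b := contr A (mixn i.+1 Unew Uold j).
  by rewrite -subr_ge0 (_ : _ - _ = (b - a) ^+ 2) ?sqr_ge0 //; ring.
lra.
Qed.

Definition als_update t (T Unext : factors R n t) (i : 'I_k) (j : 'I_t) : Prop :=
  let x := mix i Unext T j in
  col j (Unext i) =
    (Num.sg (contr A x) * (Num.sqrt (\sum_(a < n i) (contr_i A i x a 0) ^+ 2))^-1) *: contr_i A i x.

Lemma als_update_ascent t (T Unext : factors R n t) (i : 'I_k) (j : 'I_t) (kap : R) :
  0 < kap -> \sum_a T i a j ^+ 2 = 1 -> als_update T Unext i j ->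
  kap <= `|contr A (mixn i Unext T j)| ->
  [/\ \sum_a Unext i a j ^+ 2 = 1,
      `|contr A (mixn i Unext T j)| <= `|contr A (mixn i.+1 Unext T j)| &
      kap ^+ 2 * \sum_a (Unext i a j - T i a j) ^+ 2 <=
        contr A (mixn i.+1 Unext T j) ^+ 2 - contr A (mixn i Unext T j) ^+ 2].
Proof.
move=> kap_gt0 T_unit upd; set v := contr_i A i (mix i Unext T j).
rewrite contr_mixn_old contr_mixn_new => kap_le.
apply: (normalized_update (v := fun a => v a 0) T_unit _ kap_gt0 kap_le) => a.
by move/matrixP: upd => /(_ a 0); rewrite !mxE -contr_mixn_old.
Qed.

(* The ALS updates only increase [|lambda|], so the lower bound [kap] obtained at mode [s]
   from the absence of truncation propagates to all later modes. *)
Lemma als_modes_ascent s t (T Unext : factors R n t) (j : 'I_t) (kap : R) :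
  0 < kap -> (forall i : 'I_k, (s <= i)%N -> \sum_a T i a j ^+ 2 = 1) ->
  (forall i : 'I_k, (s <= i)%N -> als_update T Unext i j) ->
  kap <= `|contr A (mixn s Unext T j)| ->
  forall i : 'I_k, (s <= i)%N ->
    \sum_a Unext i a j ^+ 2 = 1 /\
    kap ^+ 2 * \sum_a (Unext i a j - T i a j) ^+ 2 <=
      contr A (mixn i.+1 Unext T j) ^+ 2 - contr A (mixn i Unext T j) ^+ 2.
Proof.
move=> kap_gt0 T_unit upd kap_le_s.
have kap_le i : (s <= i < k)%N -> kap <= `|contr A (mixn i Unext T j)|.
  elim: i => [|i IH] /andP[si lt_ik]; first by move: si kap_le_s; rewrite leqn0 => /eqP ->.
  move: si; rewrite leq_eqVlt ltnS => /orP[/eqP <- // | si].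
  pose i' := Ordinal (ltnW lt_ik).
  have kap_le_i : kap <= `|contr A (mixn i Unext T j)| by apply: IH; rewrite si ltnW.
  have [_ mono _] := als_update_ascent kap_gt0 (T_unit i' si) (upd i' si) kap_le_i.
  exact: le_trans mono.
move=> i si; have kap_le_i : kap <= `|contr A (mixn i Unext T j)|.
  by apply: kap_le; rewrite si ltn_ord.
by have [] := als_update_ascent kap_gt0 (T_unit i si) (upd i si) kap_le_i.
Qed.

Lemma als_mode_ascent s t (T Unext : factors R n t) (kap : R) :
  0 < kap -> (forall i : 'I_k, (s <= i)%N -> forall j, \sum_a T i a j ^+ 2 = 1) ->
  (forall i : 'I_k, (s <= i)%N -> forall j, als_update T Unext i j) ->
  (forall j, kap <= `|contr A (mixn s Unext T j)|) ->
  forall i : 'I_k, (s <= i)%N ->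
    kap ^+ 2 * mxdot (Unext i - T i) (Unext i - T i) <= mode_gain A i Unext T.
Proof.
move=> kap_gt0 T_unit upd kap_le i si; rewrite /mxdot exchange_big mulr_sumr /=.
apply: ler_sum => j _.
have [_ ascent] := als_modes_ascent kap_gt0
  (fun i si => T_unit i si j) (fun i si => upd i si j) (kap_le j) si.
by rewrite (eq_bigr (fun a => (Unext i a j - T i a j) ^+ 2)) // => a _; rewrite !mxE expr2.
Qed.

End Iteration.

Lemma colsub_orthonormal (R : comNzRingType) m t t' (g : 'I_t' -> 'I_t) (Q : 'M[R]_(m, t)) :
  injective g -> Q^T *m Q = 1%:M -> (mxsub id g Q)^T *m mxsub id g Q = 1%:M.
Proof.
move=> g_inj QQ; rewrite trmx_mxsub -mxsub_mul QQ.
by apply/matrixP => a b; rewrite !mxE (inj_eq g_inj).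
Qed.

Section Step.
Variables (R : realType) (k : nat) (n : 'I_k -> nat) (A : tensor R n).

(* The factors [T] of [als_phase]. *)
Definition kept_factors s t t' (g : 'I_t' -> 'I_t) (Unew Uold : factors R n t) : factors R n t' :=
  fun l => mxsub id g (if (l < s)%N then Unew l else Uold l).

Lemma kept_factors_unit s t t' (g : 'I_t' -> 'I_t) (Unew Uold : factors R n t) :
  feasible s Uold -> forall i : 'I_k, (s <= i)%N -> forall j,
  \sum_a kept_factors s g Unew Uold i a j ^+ 2 = 1.
Proof.
move=> [_ unitU] i si j; rewrite -(unitU i si (g j)).
by apply: eq_bigr => a _; rewrite mxE ltnNge si.
Qed.

Lemma kept_contr_ge s kap t t' (g : 'I_t' -> 'I_t) (Uold Unew : factors R n t)
    (Unext : factors R n t') (T := kept_factors s g Unew Uold) :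
  (0 < s <= k)%N -> (forall l : 'I_k, (l < s)%N -> Unext l = T l) ->
  forall j, ~ in_trunc A s kap Uold Unew (g j) -> kap <= `|contr A (mixn s Unext T j)|.
Proof.
move=> /andP[s_gt0 s_le_k] Unext_lt j kept.
have lt_s1k : (s.-1 < k)%N by rewrite prednK.
pose i0 := Ordinal lt_s1k; have i0S : i0.+1 = s by rewrite /= prednK.
have -> : contr A (mixn s Unext T j) = contr A (mixn s Unew Uold (g j)).
  apply: contr_ext => l; rewrite /mixn.
  by case: ifP => ls; rewrite ?Unext_lt // /T /kept_factors ls col_colsub.
rewrite leNgt; apply/negP => small; apply: kept => i iS.
have -> : i = i0 by apply: val_inj; apply: succn_inj; rewrite iS.
by rewrite diag_mulTmx_Vmat i0S.
Qed.

Lemma iapd_step_feasible b s eps kap t t' (Uold : factors R n t) (Unext : factors R n t') :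
  (0 < s <= k)%N -> 0 < kap -> feasible s Uold -> iapd_step b A s eps kap Uold Unext ->
  feasible s Unext.
Proof.
move=> s_range kap_gt0 feasU [Unew [polar [g [g_incr [g_kept [_ [Unext_lt als]]]]]]].
have g_inj : injective g by apply: increasing_ord_inj => a c; rewrite g_incr.
split=> [l ls | i si j].
  rewrite Unext_lt // /kept_factors ls; apply: colsub_orthonormal g_inj _.
  exact: polar_phase_orthonormal polar ls.
have kap_le := kept_contr_ge s_range Unext_lt ((g_kept (g j)).1 (ex_intro _ j erefl)).
have [] // := als_modes_ascent kap_gt0
  (fun i si => kept_factors_unit g Unew feasU si j) (fun i si => als i si j) kap_le si.
Qed.

Lemma iapd_step_nontrunc_size s eps kap t t' (Uold : factors R n t) (Unext : factors R n t') :
  iapd_step false A s eps kap Uold Unext -> t' = t.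
Proof.
move=> [Unew [_ [g [g_incr [g_kept [trunc_iff _]]]]]].
apply: (@increasing_onto_size _ _ g) => [a c | j]; first by rewrite g_incr.
by apply/g_kept => trunc_j; have := trunc_iff.2 (ex_intro _ j trunc_j).
Qed.

Lemma frob2_mxdot t (U : factors R n t) : frob2 U = \sum_i mxdot (U i) (U i).
Proof. by apply: eq_bigr => i _; apply: eq_bigr => a _; apply: eq_bigr => j _; rewrite expr2. Qed.

Lemma nontrunc_step_ascent s eps kap t (Uold Unext : factors R n t) :
  (0 < s <= k)%N -> 0 < eps -> 0 < kap -> feasible s Uold ->
  iapd_step false A s eps kap Uold Unext ->
  Num.min eps (2 * kap ^+ 2) / 2 * frob2 (fun i => Unext i - Uold i) <= fobj A Unext - fobj A Uold.
Proof.
move=> s_range eps_gt0 kap_gt0 feasU [Unew [polar [g [g_incr [g_kept [trunc_iff [Unext_lt als]]]]]]].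
have kept j : ~ in_trunc A s kap Uold Unew j.
  by move=> trunc_j; have := trunc_iff.2 (ex_intro _ j trunc_j).
have g_id : forall j, g j = j.
  by apply: increasing_onto_id => [a c | j]; [rewrite g_incr | exact/g_kept].
have g_idM (l : 'I_k) (M : 'M[R]_(n l, t)) : mxsub id g M = M.
  by apply/matrixP => a b; rewrite mxE g_id.
set c := Num.min eps (2 * kap ^+ 2) / 2.
have [c_le_eps c_le_kap] : c <= eps /\ c <= kap ^+ 2.
  have kap2_ge0 := sqr_ge0 kap.
  by rewrite /c; case: (leP eps (2 * kap ^+ 2)) => ?; split; lra.
rewrite frob2_mxdot fobj_telescope mulr_sumr; apply: ler_sum => i _.
case: (ltnP i s) => [lt_is | le_si].
  have UnextE (l : 'I_k) : (l <= i)%N -> Unext l = Unew l.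
    by move=> /leq_ltn_trans/(_ lt_is) ls; rewrite Unext_lt // g_idM ls.
  rewrite (mode_gain_congr A (U2 := Unew) (V2 := Uold)) // UnextE //.
  apply: le_trans (polar_phase_ascent polar lt_is (feasU.1 i lt_is)).
  by rewrite ler_wpM2r ?mxdot_ge0.
have TE (l : 'I_k) : (s <= l)%N -> kept_factors s g Unew Uold l = Uold l.
  by move=> sl; rewrite /kept_factors ltnNge sl g_idM.
have kap_le j := kept_contr_ge s_range Unext_lt (kept (g j)).
rewrite (mode_gain_congr A (U2 := Unext) (V2 := kept_factors s g Unew Uold)) => // [|l il].
  rewrite -TE //; apply: le_trans (als_mode_ascent kap_gt0
    (fun i si => kept_factors_unit g Unew feasU si) als kap_le le_si).
  by rewrite ler_wpM2r ?mxdot_ge0.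
by rewrite TE //; apply: leq_trans il.
Qed.

Lemma iapd_step_nontrunc_ascent s eps kap t t' (Uold : factors R n t) (Unext : factors R n t') :
  (0 < s <= k)%N -> 0 < eps -> 0 < kap -> feasible s Uold ->
  iapd_step false A s eps kap Uold Unext ->
  exists e : t' = t,
    fobj A Unext - fobj A Uold >= Num.min eps (2 * kap ^+ 2) / 2 *
      frob2 (fun i : 'I_k => castmx (erefl (n i), e) (Unext i) - Uold i).
Proof.
move=> s_range eps_gt0 kap_gt0 feasU step.
have e := iapd_step_nontrunc_size step; subst t'; exists erefl.
exact: (nontrunc_step_ascent s_range eps_gt0 kap_gt0 feasU step).
Qed.

End Step.

Theorem proposition5p4 (R : realType) (k : nat) (n : 'I_k -> nat) (s r : nat)
    (A : tensor R n) (eps kappa : R)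
    (t : nat -> nat) (U : forall q : nat, factors R n (t q)) (p : nat) :
  (3 <= k)%N -> (1 <= s <= k)%N ->
  (forall i : 'I_k, (i < s)%N -> (r <= n i)%N) ->
  (exists iota, A iota != 0) ->
  0 < eps ->
  t 0%N = r -> feasible s (U 0%N) -> 0 < fobj A (U 0%N) ->
  0 < kappa -> kappa < Num.sqrt (fobj A (U 0%N) / r%:R) ->
  (forall q : nat, exists b : bool, iapd_step b A s eps kappa (U q) (U q.+1)) ->
  iapd_step false A s eps kappa (U p) (U p.+1) ->
  exists e : t p.+1 = t p,
    fobj A (U p.+1) - fobj A (U p) >=
      Num.min eps (2 * kappa ^+ 2) / 2 *
        frob2 (fun i : 'I_k => castmx (erefl (n i), e) (U p.+1 i) - U p i).
Proof.
move=> _ s_range _ _ eps_gt0 _ feas0 _ kappa_gt0 _ steps nontrunc.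
have feas q : feasible s (U q).
  by elim: q => // q IH; have [b step] := steps q; apply: iapd_step_feasible step.
exact: iapd_step_nontrunc_ascent s_range eps_gt0 kappa_gt0 (feas p) nontrunc.
Qed.
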